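(* Consider Algorithm MWHVC (described in the context) run in the CONGEST model on a hypergraph $G=(V,E)$ of rank $f$ and maximum degree $\Delta\ge 3$ with nonnegative vertex weights $w$, with parameters $\varepsilon\in(0,1]$, $\beta=\varepsilon/(f+\varepsilon)$ and multiplier $\alpha=\log\Delta/\log\log\Delta$. Then the round complexity of the algorithm is $O\left(\frac{f^2}{\varepsilon}\cdot\frac{\log\Delta}{\log\log\Delta}\right)$.
   Context: Let $G=(V,E)$ be a hypergraph with $n=|V|$: each hyperedge is a nonempty subset of $V$ of size at most $f$ (rank $f$). Vertices have nonnegative weights $w(v)$; weights and degrees are assumed polynomial in $n$. For $v\in V$, $E(v)=\{e\in E: v\in e\}$; $\Delta=\max_v |E(v)|\ge 3$. A hyperedge $e$ is covered by $C\subseteq V$ if $e\cap C\neq\emptyset$. The computation is distributed in synchronous rounds (CONGEST: messages of $O(\log n)$ bits) on the bipartite network with node set $V\cup E$ and a link between $v$ and $e$ iff $v\in e$. Parameters: $\varepsilon\in(0,1]$, $\beta=\varepsilon/(f+\varepsilon)$, and a multiplier $\alpha>1$. Algorithm MWHVC: Initialize $C\gets\emptyset$ and $E'(v)\gets E(v)$ for every $v$. Iteration $0$: every hyperedge $e$ sets $\mathrm{deal}_0(e)=\beta\cdot\min_{v\in e} w(v)/|E(v)|$ and $\delta_0(e)=\mathrm{deal}_0(e)$. For $i=1,2,\dots$: (a) every vertex $v\notin C$ (not terminated) checks whether $\sum_{e\in E(v)}\delta_{i-1}(e)\ge(1-\beta)w(v)$; if so, $v$ joins $C$, tells every $e\in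 E'(v)$ that $e$ is covered, and terminates. (b) Every uncovered hyperedge that receives such a message becomes covered, informs all its vertices, and terminates. (c) Every vertex $v\notin C$ that is told $e$ is covered sets $E'(v)\gets E'(v)\setminus\{e\}$; if $E'(v)=\emptyset$, $v$ terminates without joining $C$. (d) Every vertex $v\notin C$ sends ''raise'' to all $e\in E'(v)$ if $\sum_{e\in E'(v)}\mathrm{deal}_{i-1}(e)\le(\beta/\alpha)w(v)$, and otherwise sends ''stuck'' to all $e\in E'(v)$. (e) Every uncovered hyperedge $e$ sets $\mathrm{deal}_i(e)=\mathrm{deal}_{i-1}(e)$ if it received some ''stuck'' message, and $\mathrm{deal}_i(e)=\alpha\cdot\mathrm{deal}_{i-1}(e)$ otherwise, and $\delta_i(e)=\delta_{i-1}(e)+\mathrm{deal}_i(e)$, sending the new deal to its vertices. A vertex terminates when it is in $C$ or all its hyperedges are covered; a hyperedge terminates when covered. *)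

From HB Require Import structures.
From mathcomp Require Import all_boot all_order all_algebra.
From mathcomp Require Import reals exp.
Set Implicit Arguments. Unset Strict Implicit. Unset Printing Implicit Defensive.
Import Order.TTheory GRing.Theory Num.Theory.
Local Open Scope ring_scope.

Section MWHVC.
Variables (R : realType) (V : finType).
Variable E : {set {set V}}.
Variable w : V -> R.
Variables (beta alpha : R).

Definition Ev (v : V) : {set {set V}} := [set e in E | v \in e].

Definition maxdeg : nat := \max_(v : V) #|Ev v|.

Definition minover (A : {set V}) (F : V -> R) : R :=
  match [pick v in A] with
  | Some v0 => \big[Num.min/F v0]_(v in A) F v
  | None => 0
  end.

Record state := State {
  inC   : {set V};
  cov   : {set {set V}};      (* covered (hence terminated) hyperedges *)
  Ep    : V -> {set {set V}};
  deal  : {set V} -> R;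
  delta : {set V} -> R }.

Definition alive (s : state) (v : V) : bool := (v \notin inC s) && (Ep s v != set0).

Definition deal0 (e : {set V}) : R :=
  if e \in E then beta * minover e (fun v => w v / (#|Ev v|)%:R) else 0.

Definition state0 : state := State set0 set0 Ev deal0 deal0.

Definition step (s : state) : state :=
  let joinA := [set v | alive s v &&
                  ((1 - beta) * w v <= \sum_(e in Ev v) delta s e)] in
  let C' := inC s :|: joinA in
  let newcov := [set e in E | (e \notin cov s) &&
                  [exists v, (v \in joinA) && (e \in Ep s v)]] in
  let cov' := cov s :|: newcov in
  let Ep' := fun v => if v \in C' then Ep s v else Ep s v :\: newcov in
  let s' := State C' cov' Ep' (deal s) (delta s) in
  let raise := fun v => \sum_(e in Ep' v) deal s e <= beta / alpha * w v in
  let stuckmsg := fun e => [exists v, [&& alive s' v, e \in Ep' v & ~~ raise v]] in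
  let deal' := fun e => if (e \in E) && (e \notin cov') then
                 (if stuckmsg e then deal s e else alpha * deal s e)
               else deal s e in
  let delta' := fun e => if (e \in E) && (e \notin cov') then
                 delta s e + deal' e else delta s e in
  State C' cov' Ep' deal' delta'.

Fixpoint stateAt (i : nat) : state :=
  if i is i'.+1 then step (stateAt i') else state0.

Definition finished (s : state) : bool :=
  [forall e in E, e \in cov s] && [forall v, ~~ alive s v].

(* number of CONGEST rounds used by iterations 0..T: iteration 0 takes
   at most 2 rounds (vertices send w(v)/|E(v)|, edges send deal_0), and each
   later iteration takes at most 4 rounds (steps (a),(b),(d),(e)). *)
Definition rounds (T : nat) : nat := 4 * T + 2.

End MWHVC.

(* In every iteration an uncovered hyperedge e either multiplies its deal by alpha or has
   a stuck vertex.  Since deal_0(e) = beta w(u)/|E(u)| for the vertex u of e minimising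
   w(u)/|E(u)|, and u lets e raise only while deal(e) <= (beta/alpha) w(u), e is raised at
   most log_alpha Delta times.  Each iteration in which a vertex v is stuck adds more than
   (beta/alpha) w(v) to the sum of delta over E(v), which stays below (1 - beta) w(v) while v
   is outside C; so v is stuck at most alpha (1 - beta)/beta + 1 = alpha f/eps + 1 times.
   Hence every hyperedge is covered after log_alpha Delta + f (alpha f/eps + 1) iterations,
   and log_alpha Delta <= 2 alpha because ln x <= x/2 applied to x = ln ln Delta. *)

From Pilot Require Import Defs.
From HB Require Import structures.
From mathcomp Require Import all_boot all_order all_algebra.
From mathcomp Require Import reals exp sequences.
From mathcomp Require Import ring lra.
Import Order.TTheory GRing.Theory Num.Theory.
Set Implicit Arguments. Unset Strict Implicit. Unset Printing Implicit Defensive.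
Local Open Scope ring_scope.

Lemma expR1_lt3 (R : realType) : expR (1 : R) < 3.
Proof.
(* expR (-1/6) > 5/6 gives e < (6/5)^6 < 2.99. *)
have sixth : expR (1 : R) = expR (1 / 6) ^+ 6 by rewrite -expRM_natl; congr expR; lra.
have small : expR (1 / 6 : R) < 6 / 5.
  have := @expR_gt1Dx R (- (1 / 6)); rewrite expRN.
  have -> : - (1 / 6) != 0 :> R by lra.
  move=> /(_ isT) h; rewrite -ltf_pV2 ?posrE ?expR_gt0 ?divr_gt0 // invf_div; lra.
rewrite sixth; apply: (@lt_trans _ _ ((6 / 5) ^+ 6)).
  by rewrite ltrXn2r // expR_ge0.
rewrite !exprS expr0; lra.
Qed.

Lemma ln_le_half (R : realType) (y : R) : 0 < y -> ln y <= y / 2.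
Proof.
(* With z = sqrt y: ln y = 2 ln z <= 2 (z - 1) <= z^2 / 2. *)
move=> y_gt0; set z := expR (ln y / 2).
have z_gt0 : 0 < z := expR_gt0 _.
have zz : z * z = y by rewrite /z -expRD -splitr lnK.
have ln_z : ln y = 2 * ln z by rewrite /z expRK; lra.
have : ln z <= z - 1 by have := @le_ln1Dx R (z - 1); rewrite addrCA subrr addr0; apply; lra.
have := sqr_ge0 (z - 2); rewrite ln_z -zz expr2; nra.
Qed.

Lemma ln_ge3_gt1 (R : realType) (D : R) : 3 <= D -> 1 < ln D.
Proof.
move=> D_ge3; have e_lt_D := lt_le_trans (expR1_lt3 R) D_ge3.
by rewrite -(expRK 1) ltr_ln ?posrE ?expR_gt0 // (lt_trans (expR_gt0 1)).
Qed.

Lemma loglog_multiplier_bounds (R : realType) (D : R) : 3 <= D ->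
  let alpha := ln D / ln (ln D) in 1 < alpha /\ ln D / ln alpha <= 2 * alpha.
Proof.
move=> D_ge3 alpha; set L := ln D.
have L_gt1 : 1 < L := ln_ge3_gt1 D_ge3.
have L_gt0 : 0 < L by apply: lt_trans L_gt1.
have lnL_gt0 : 0 < ln L by apply: ln_gt0.
have alpha_gt1 : 1 < alpha by rewrite ltr_pdivlMr // mul1r; apply: ln_sublinear.
have ln_alpha : ln alpha = ln L - ln (ln L) by rewrite ln_div ?posrE.
have lnlnL_le : ln (ln L) <= ln L / 2 := ln_le_half lnL_gt0.
split => //; rewrite ler_pdivrMr ?ln_gt0 //.
have -> : L = alpha * ln L by rewrite /alpha mulfVK ?gt_eqF.
rewrite ln_alpha; nra.
Qed.

Lemma minover_attained (R : realType) (T : finType) (A : {set T}) (F : T -> R) :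
  A != set0 -> exists2 u, u \in A & minover A F = F u.
Proof.
move=> /set0Pn [x xA]; rewrite /minover.
case: pickP => [v0 v0A|]; last by move=> /(_ x); rewrite xA.
apply: (big_ind (fun y => exists2 u, u \in A & y = F u)) => //.
- by exists v0.
- move=> _ _ [u uA ->] [u' u'A ->].
  by case: (leP (F u) (F u')) => _; [exists u | exists u'].
- by move=> u uA; exists u.
Qed.

Lemma minover_ge0 (R : realType) (T : finType) (A : {set T}) (F : T -> R) :
  (forall v, 0 <= F v) -> 0 <= minover A F.
Proof.
move=> F_ge0; rewrite /minover; case: pickP => // v0 _.
by apply: (big_ind (fun y => 0 <= y)) => // y z y_ge0 z_ge0; rewrite le_min y_ge0.
Qed.

Lemma card_Ev_le_maxdeg (T : finType) (E : {set {set T}}) v : (#|Ev E v| <= maxdeg E)%N.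
Proof. exact: (@leq_bigmax _ (fun v => #|Ev E v|) v). Qed.

Section Termination.
Variables (R : realType) (V : finType) (E : {set {set V}}) (w : V -> R) (beta alpha : R).
Hypotheses (w_ge0 : forall v, 0 <= w v) (beta_gt0 : 0 < beta) (beta_lt1 : beta < 1).
Hypotheses (alpha_gt1 : 1 < alpha) (edge_neq0 : forall e, e \in E -> e != set0).

Local Notation state := (Defs.state R V).
Local Notation step := (Defs.step E w beta alpha).
Local Notation S i := (stateAt E w beta alpha i).

Let alpha_gt0 : 0 < alpha. Proof. exact: lt_trans alpha_gt1. Qed.

Definition joiners (s : state) :=
  [set v | alive s v && ((1 - beta) * w v <= \sum_(e in Ev E v) delta s e)].
Definition newly_covered (s : state) :=
  [set e in E | (e \notin cov s) && [exists v, (v \in joiners s) && (e \in Ep s v)]].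
Definition uncovered (s : state) e := (e \in E) && (e \notin cov s).
Definition raises (s s' : state) v := \sum_(e in Ep s' v) deal s e <= beta / alpha * w v.
Definition gets_stuck (s : state) e :=
  [exists v, [&& alive (step s) v, e \in Ep (step s) v & ~~ raises s (step s) v]].

Lemma inC_step s : inC (step s) = inC s :|: joiners s. Proof. by []. Qed.
Lemma cov_step s : cov (step s) = cov s :|: newly_covered s. Proof. by []. Qed.
Lemma Ep_step s v :
  Ep (step s) v = if v \in inC (step s) then Ep s v else Ep s v :\: newly_covered s.
Proof. by []. Qed.
Lemma deal_step s e : deal (step s) e = if uncovered (step s) e then
  (if gets_stuck s e then deal s e else alpha * deal s e) else deal s e.
Proof. by []. Qed.
Lemma delta_step s e :
  delta (step s) e = if uncovered (step s) e then delta s e + deal (step s) e else delta s e.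
Proof. by []. Qed.

Definition state_inv (s : state) :=
  [/\ forall v, v \notin inC s -> Ep s v = Ev E v :\: cov s,
      forall v, v \in inC s -> Ev E v \subset cov s,
      forall e, 0 <= deal s e & forall e, 0 <= delta s e].

Lemma deal0_ge0 e : 0 <= deal0 E w beta e.
Proof.
rewrite /deal0; case: ifP => // _; rewrite mulr_ge0 ?(ltW beta_gt0) //.
by apply: minover_ge0 => v; rewrite divr_ge0.
Qed.

Lemma state_inv0 : state_inv (S 0).
Proof. by split=> //= [v _|v|e|e]; rewrite ?setD0 ?inE //; apply: deal0_ge0. Qed.

Lemma deal_step_ge0 s e : 0 <= deal s e -> 0 <= deal (step s) e.
Proof. by move=> deal_ge0; rewrite deal_step; do 2!case: ifP => _ //; rewrite mulr_ge0 // ltW. Qed.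

Lemma state_inv_step s : state_inv s -> state_inv (step s).
Proof.
case=> Ep_out C_cov deal_ge0 delta_ge0; split.
- move=> v; rewrite inC_step inE negb_or => /andP [vC vJ].
  by rewrite Ep_step inC_step inE (negbTE vC) (negbTE vJ) Ep_out // setDDl.
- move=> v; rewrite inC_step inE cov_step => /orP [vC|vJ].
    exact: subset_trans (C_cov v vC) (subsetUl _ _).
  apply/subsetP => e eEv; rewrite inE; case ec: (e \in cov s) => //=.
  have vC : v \notin inC s by move: vJ; rewrite inE => /andP [/andP []].
  have eE : e \in E by move: eEv; rewrite inE => /andP [].
  rewrite inE eE ec; apply/existsP; exists v.
  by rewrite vJ Ep_out // inE ec.
- by move=> e; apply: deal_step_ge0.
- move=> e; rewrite delta_step; case: ifP => // _.
  by rewrite addr_ge0 ?deal_step_ge0.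
Qed.

Lemma state_invN n : state_inv (S n).
Proof. by elim: n => [|n IHn]; [apply: state_inv0 | apply: state_inv_step]. Qed.

Lemma deal_leS n e : deal (S n) e <= deal (S n.+1) e.
Proof.
case: (state_invN n) => _ _ deal_ge0 _; rewrite [deal (S n.+1) e]deal_step.
by do 2!case: ifP => _ //; rewrite ler_peMl // ltW.
Qed.

Lemma delta_leS n e : delta (S n) e <= delta (S n.+1) e.
Proof.
case: (state_invN n.+1) => _ _ deal_ge0 _.
by rewrite [delta (S n.+1) e]delta_step; case: ifP => // _; rewrite lerDl.
Qed.

Lemma uncovered_step s e : uncovered (step s) e -> uncovered s e.
Proof. by rewrite /uncovered cov_step inE negb_or => /andP [-> /andP []]. Qed.

Lemma uncovered_le i j e : (i <= j)%N -> uncovered (S j) e -> uncovered (S i) e.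
Proof.
elim: j => [|j IHj]; first by rewrite leqn0 => /eqP ->.
rewrite leq_eqVlt => /predU1P [-> //|]; rewrite ltnS => le_ij /uncovered_step.
exact: IHj.
Qed.

Lemma uncovered_alive s e u : state_inv s -> uncovered s e -> u \in e ->
  alive s u && (e \in Ep s u).
Proof.
case=> Ep_out C_cov _ _ /andP [eE ec] ue.
have eEu : e \in Ev E u by rewrite inE eE ue.
have uC : u \notin inC s.
  by apply: contra ec => /C_cov /subsetP; apply.
have eEp : e \in Ep s u by rewrite Ep_out // inE ec.
by rewrite /alive uC eEp andbT; apply/set0Pn; exists e.
Qed.

Lemma sum_delta_ge0 s v : state_inv s -> 0 <= \sum_(e in Ev E v) delta s e.
Proof. by case=> _ _ _ delta_ge0; apply: sumr_ge0. Qed.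

(* Otherwise u would have joined C in this step and covered e. *)
Lemma sum_delta_lt_uncovered s e u : state_inv s -> uncovered (step s) e -> u \in e ->
  \sum_(e' in Ev E u) delta s e' < (1 - beta) * w u.
Proof.
move=> inv_s unc ue; have unc_s := uncovered_step unc.
have /andP [u_alive eEp] := uncovered_alive inv_s unc_s ue.
rewrite ltNge; apply: contraL unc => joins.
move: unc_s => /andP [eE ec].
rewrite /uncovered cov_step !inE eE (negbTE ec) /= negbK; apply/existsP; exists u.
by rewrite eEp inE u_alive joins.
Qed.

Lemma w_gt0_uncovered s e u : state_inv s -> uncovered (step s) e -> u \in e -> 0 < w u.
Proof.
move=> inv_s unc ue; have := sum_delta_lt_uncovered inv_s unc ue.
move=> /(le_lt_trans (sum_delta_ge0 u inv_s)).
by rewrite pmulr_rgt0 // subr_gt0.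
Qed.

Lemma Ep_alive s v : state_inv s -> alive s v -> Ep s v = Ev E v :\: cov s.
Proof. by case=> Ep_out _ _ _ /andP [vC _]; apply: Ep_out. Qed.

Definition stuck i v := alive (S i.+1) v && ~~ raises (S i) (S i.+1) v.
Definition stuck_count v n := (\sum_(0 <= i < n) stuck i v)%N.
Definition stuck_max := (1 - beta) / (beta / alpha) + 1.

Lemma stuck_countS v n : stuck_count v n.+1 = (stuck_count v n + stuck n v)%N.
Proof. exact: big_nat_recr. Qed.

Lemma sum_delta_stuck_incr n v : stuck n v ->
  \sum_(e in Ev E v) delta (S n) e + beta / alpha * w v <=
  \sum_(e in Ev E v) delta (S n.+1) e.
Proof.
move=> /andP [v_alive]; rewrite /raises -ltNge => /ltW not_raise.
have Ep_v := Ep_alive (state_invN n.+1) v_alive.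
pose gain e := if e \in Ep (S n.+1) v then deal (S n) e else 0.
have delta_gain : \sum_(e in Ev E v) (delta (S n) e + gain e) <=
                  \sum_(e in Ev E v) delta (S n.+1) e.
  apply: ler_sum => e _; rewrite /gain; case: ifP => eEp.
    have unc : uncovered (S n.+1) e.
      move: eEp; rewrite Ep_v in_setD => /andP [ec].
      by rewrite inE => /andP [eE _]; apply/andP.
    by rewrite [delta (S n.+1) e]delta_step unc lerD2l deal_leS.
  by rewrite addr0 delta_leS.
apply: le_trans delta_gain; rewrite big_split lerD2l /= /gain -big_mkcondr.
suff -> : \sum_(e in Ev E v | e \in Ep (S n.+1) v) deal (S n) e =
          \sum_(e in Ep (S n.+1) v) deal (S n) e by [].
by apply: eq_bigl => e; rewrite Ep_v in_setD andbCA andbb.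
Qed.

Lemma stuck_count_le_sum_delta v n :
  (stuck_count v n)%:R * (beta / alpha * w v) <= \sum_(e in Ev E v) delta (S n) e.
Proof.
elim: n => [|n IHn].
  by rewrite /stuck_count big_geq // mul0r; apply/sum_delta_ge0/state_invN.
rewrite stuck_countS natrD mulrDl; case st: (stuck n v); last first.
  by rewrite mul0r addr0 (le_trans IHn) // ler_sum // => e _; rewrite delta_leS.
by rewrite mul1r (le_trans _ (sum_delta_stuck_incr st)) // lerD2r.
Qed.

Lemma sum_delta_lt_stuck n v : stuck n v ->
  \sum_(e in Ev E v) delta (S n) e < (1 - beta) * w v.
Proof.
move=> /andP [/andP [vC Ep_neq0] _].
move: vC; rewrite inC_step inE negb_or => /andP [vC vJ].
move: Ep_neq0; rewrite Ep_step inC_step inE (negbTE vC) (negbTE vJ) => Ep_neq0.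
have v_alive : alive (S n) v.
  by rewrite /alive vC; apply: contra Ep_neq0 => /eqP ->; rewrite set0D.
by move: vJ; rewrite inE v_alive -ltNge.
Qed.

Lemma stuck_max_ge0 : 0 <= stuck_max.
Proof. by rewrite addr_ge0 // divr_ge0 ?subr_ge0 ?ltW ?divr_gt0. Qed.

Lemma stuck_count_le v n : (stuck_count v n)%:R <= stuck_max.
Proof.
have beta_alpha_gt0 : 0 < beta / alpha by rewrite divr_gt0.
elim: n => [|n IHn]; first by rewrite /stuck_count big_geq // stuck_max_ge0.
rewrite stuck_countS natrD; case st: (stuck n v); last by rewrite addr0.
have lt_w := le_lt_trans (stuck_count_le_sum_delta v n) (sum_delta_lt_stuck st).
have w_gt0 : 0 < w v.
  move: (le_lt_trans (mulr_ge0 (ler0n _ _) (mulr_ge0 (ltW beta_alpha_gt0) (w_ge0 v))) lt_w).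
  by rewrite pmulr_rgt0 // subr_gt0.
rewrite mulrA ltr_pM2r // -ltr_pdivlMr // in lt_w.
by rewrite lerD2r ltW.
Qed.

Definition raised i e := uncovered (S i.+1) e && ~~ gets_stuck (S i) e.
Definition raise_count e n := (\sum_(0 <= i < n) raised i e)%N.

Lemma raise_countS e n : raise_count e n.+1 = (raise_count e n + raised n e)%N.
Proof. exact: big_nat_recr. Qed.

Lemma deal_raise_count n e : deal (S n) e = alpha ^+ raise_count e n * deal0 E w beta e.
Proof.
elim: n => [|n IHn]; first by rewrite /raise_count big_geq // mul1r.
rewrite [deal (S n.+1) e]deal_step raise_countS exprD /raised IHn.
by case: (uncovered _ e); case: (gets_stuck _ e); rewrite /= ?mulr1 // mulrCA -mulrA.
Qed.

Lemma raised_exp_le_maxdeg n e : e \in E -> raised n e ->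
  alpha ^+ (raise_count e n).+1 <= (maxdeg E)%:R.
Proof.
move=> eE /andP [unc not_stuck].
have [u ue u_min] := minover_attained (fun v => w v / (#|Ev E v|)%:R) (edge_neq0 eE).
have /andP [u_alive eEp] := uncovered_alive (state_invN n.+1) unc ue.
have u_raises : raises (S n) (S n.+1) u.
  apply/negPn; apply: contra not_stuck => u_stuck.
  by apply/existsP; exists u; rewrite u_alive eEp u_stuck.
have w_gt0 : 0 < w u := w_gt0_uncovered (state_invN n) unc ue.
have deg_gt0 : 0 < (#|Ev E u|)%:R :> R.
  by rewrite ltr0n card_gt0; apply/set0Pn; exists e; rewrite inE eE ue.
have deal_le : deal (S n) e <= beta / alpha * w u.
  apply: le_trans u_raises; rewrite /raises (bigD1 e) //= lerDl.
  by case: (state_invN n) => _ _ deal_ge0 _; apply: sumr_ge0.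
rewrite deal_raise_count /deal0 eE u_min in deal_le.
apply: le_trans (_ : (#|Ev E u|)%:R <= _); last by rewrite ler_nat card_Ev_le_maxdeg.
set d := (#|Ev E u|)%:R in deg_gt0 deal_le *; set x := alpha ^+ _ in deal_le *.
have scale_ge0 : 0 <= alpha * d / (beta * w u) by rewrite ltW // !(mulr_gt0, invr_gt0).
have := ler_wpM2r scale_ge0 deal_le.
have -> : x * (beta * (w u / d)) * (alpha * d / (beta * w u)) = x * alpha.
  by field; rewrite !gt_eqF.
have -> : beta / alpha * w u * (alpha * d / (beta * w u)) = d.
  by field; rewrite !gt_eqF.
by rewrite exprSr.
Qed.

Lemma exp_raise_count_le_maxdeg n e : e \in E -> alpha ^+ raise_count e n <= (maxdeg E)%:R.
Proof.
move=> eE; elim: n => [|n IHn].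
  rewrite /raise_count big_geq // expr0 ler1n.
  have /set0Pn [u ue] := edge_neq0 eE.
  apply: leq_trans (card_Ev_le_maxdeg E u); rewrite card_gt0.
  by apply/set0Pn; exists e; rewrite inE eE ue.
rewrite raise_countS; case r: (raised n e); last by rewrite addn0.
by rewrite addn1; apply: raised_exp_le_maxdeg.
Qed.

Lemma raise_count_le_log n e : e \in E ->
  (raise_count e n)%:R <= ln ((maxdeg E)%:R : R) / ln alpha.
Proof.
move=> eE; have ln_alpha_gt0 : 0 < ln alpha by apply: ln_gt0.
have exp_le := exp_raise_count_le_maxdeg n eE.
have exp_gt0 : 0 < alpha ^+ raise_count e n by apply: exprn_gt0.
rewrite ler_pdivlMr // mulr_natl -lnXn // ler_ln ?posrE //.
exact: lt_le_trans exp_le.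
Qed.

Lemma uncovered_raised_or_stuck n e : uncovered (S n.+1) e ->
  (0 < raised n e + \sum_(u in e) stuck n u)%N.
Proof.
move=> unc; case r: (raised n e) => //.
move: r; rewrite /raised unc /= => /negbFE /existsP [v /and3P [v_alive eEp not_raise]].
have ve : v \in e.
  by move: eEp; rewrite (Ep_alive (state_invN n.+1) v_alive) !inE => /andP [_ /andP []].
by rewrite add0n (bigD1 v) //= /stuck v_alive not_raise.
Qed.

Lemma iterations_le_counts n e : uncovered (S n) e ->
  (n <= raise_count e n + \sum_(u in e) stuck_count u n)%N.
Proof.
move=> unc; rewrite /raise_count /stuck_count exchange_big -big_split /=.
rewrite -[X in (X <= _)%N]card_ord -sum1_card big_mkord leq_sum // => i _.
by apply: uncovered_raised_or_stuck; apply: uncovered_le unc.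
Qed.

Lemma finished_of_covered n : {subset E <= cov (S n)} -> finished E (S n).
Proof.
move=> E_cov; apply/andP; split; first by apply/forall_inP.
apply/forallP => v; rewrite /alive negb_and !negbK orbC; apply/orP.
case: (boolP (v \in inC _)) => [|vC]; [by right | left].
case: (state_invN n) => Ep_out _ _ _; rewrite Ep_out // setD_eq0.
by apply/subsetP => e; rewrite inE => /andP [/E_cov].
Qed.

Lemma finished_after (f n : nat) : (forall e, e \in E -> (#|e| <= f)%N) ->
  ln ((maxdeg E)%:R : R) / ln alpha + f%:R * stuck_max < n%:R -> finished E (S n).
Proof.
move=> rank_f lt_n.
have [/forall_inP E_cov|/forall_inPn [e eE ec]] := boolP [forall e in E, e \in cov (S n)].
  exact: finished_of_covered.
move: lt_n; apply/contraLR => _.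
rewrite -leNgt; apply: le_trans (_ : (raise_count e n + \sum_(u in e) stuck_count u n)%:R <= _).
  by rewrite ler_nat iterations_le_counts // /uncovered eE.
rewrite natrD natr_sum lerD ?raise_count_le_log //.
apply: le_trans (_ : \sum_(u in e) stuck_max <= _).
  by apply: ler_sum => u _; apply: stuck_count_le.
rewrite sumr_const -[stuck_max *+ _]mulr_natl ler_wpM2r ?ler_nat ?rank_f //.
exact: stuck_max_ge0.
Qed.

End Termination.

Lemma rank_gt0 (T : finType) (E : {set {set T}}) (f : nat) : (0 < maxdeg E)%N ->
  (forall e, e \in E -> e != set0 /\ (#|e| <= f)%N) -> (0 < f)%N.
Proof.
move=> maxdeg_gt0 edges; have /set0Pn [e eE] : E != set0.
  apply: contraTneq maxdeg_gt0 => ->; rewrite -leqNgt leqn0; apply/eqP/big1 => v _.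
  by apply/eqP; rewrite cards_eq0; apply/eqP/setP => e; rewrite !inE.
have [/set0Pn [u ue] card_le] := edges e eE.
by apply: leq_trans card_le; rewrite card_gt0; apply/set0Pn; exists u.
Qed.

Lemma stuck_max_rank (R : realType) (f : nat) (eps alpha : R) : 0 < eps -> alpha != 0 ->
  stuck_max (eps / (f%:R + eps)) alpha = alpha * f%:R / eps + 1.
Proof.
move=> eps_gt0 alpha_neq0; have f_eps_gt0 : 0 < f%:R + eps by rewrite ltr_wpDl.
by rewrite /stuck_max; congr (_ + _); field; rewrite alpha_neq0 !gt_eqF.
Qed.

Lemma rounds_budget_le (R : realType) (f : nat) (eps alpha x : R) :
  (1 <= f)%N -> 0 < eps <= 1 -> 1 < alpha -> 0 <= x <= 2 * alpha ->
  (rounds (Num.truncn (x + f%:R * stuck_max (eps / (f%:R + eps)) alpha)).+1)%:R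
    <= 22 * (f%:R ^+ 2 / eps * alpha).
Proof.
move=> f_ge1 /andP [eps_gt0 eps_le1] alpha_gt1 /andP [x_ge0 x_le].
have f1 : 1 <= f%:R :> R by rewrite ler1n.
rewrite stuck_max_rank ?gt_eqF ?(lt_trans _ alpha_gt1) //.
set Y := f%:R ^+ 2 / eps; set B := x + _.
have f_le_Y : f%:R <= Y.
  by rewrite /Y ler_pdivlMr // expr2 ler_pM2l ?(lt_le_trans _ f1) // (le_trans eps_le1).
have B_eq : B = x + alpha * Y + f%:R by rewrite /B /Y; field; rewrite gt_eqF.
have B_ge0 : 0 <= B by rewrite B_eq; nra.
have /andP [truncn_le _] := truncn_itv B_ge0.
have Y_ge1 : 1 <= Y := le_trans f1 f_le_Y.
have alpha_gt0 : 0 < alpha by apply: lt_trans alpha_gt1.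
have alpha_le : alpha <= alpha * Y by rewrite ler_peMr // ltW.
have Y_le : Y <= alpha * Y by rewrite ler_peMl ?ltW // (lt_le_trans ltr01 Y_ge1).
rewrite /rounds mulnS !natrD; lra.
Qed.

Theorem mainTheorem7 (R : realType) (k : nat) :
  exists c : R, forall (V : finType) (E : {set {set V}}) (w : V -> nat)
    (f : nat) (eps : R),
    (forall e, e \in E -> e != set0 /\ (#|e| <= f)%N) ->
    (3 <= maxdeg E)%N ->
    (* weights and degrees polynomial in n = |V| *)
    (forall v, (w v <= #|V| ^ k)%N) ->
    (maxdeg E <= #|V| ^ k)%N ->
    0 < eps -> eps <= 1 ->
    let beta := eps / (f%:R + eps) in
    let Delta : R := (maxdeg E)%:R in
    let alpha := ln Delta / ln (ln Delta) in
    exists T : nat,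
      finished E (stateAt E (fun v => (w v)%:R) beta alpha T) /\
      (rounds T)%:R <= c * ((f%:R ^+ 2 / eps) * (ln Delta / ln (ln Delta))).
Proof.
exists 22 => V E w f eps edges maxdeg_ge3 _ _ eps_gt0 eps_le1 beta Delta alpha.
have [alpha_gt1 log_le] :=
  @loglog_multiplier_bounds R Delta (etrans (ler_nat R 3 _) maxdeg_ge3).
have maxdeg_gt0 : (0 < maxdeg E)%N := leq_ltn_trans (leq0n 2) maxdeg_ge3.
have f_ge1 : (1 <= f)%N := rank_gt0 maxdeg_gt0 edges.
have beta_gt0 : 0 < beta by rewrite divr_gt0 // ltr_wpDl.
have beta_lt1 : beta < 1 by rewrite ltr_pdivrMr ?ltr_wpDl // mul1r ltrDr ltr0n.
have log_ge0 : 0 <= ln Delta / ln alpha.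
  by rewrite divr_ge0 ?ln_ge0 ?(ltW alpha_gt1) // ler1n.
set B := ln Delta / ln alpha + f%:R * stuck_max beta alpha.
have B_ge0 : 0 <= B.
  by rewrite addr_ge0 // mulr_ge0 // (stuck_max_ge0 beta_gt0 beta_lt1 alpha_gt1).
exists (Num.truncn B).+1; split.
  apply: (finished_after (fun v => ler0n _ _) beta_gt0 beta_lt1 alpha_gt1
           (fun e eE => (edges e eE).1) (fun e eE => (edges e eE).2)).
  by case/andP: (truncn_itv B_ge0).
by apply: rounds_budget_le; rewrite ?eps_gt0 ?log_ge0.
Qed.
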